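(* Let $F_1,F_2\colon\mathbf{A}\to\mathbf{B}$ be lenses, and let $E\colon\mathbf{B}\to\mathbf{C}$ be a lens with $E\circ F_1=E\circ F_2$ such that the get functor $UE$ is a coequaliser of $UF_1$ and $UF_2$ in $\mathbf{Cat}$. Let $G\colon\mathbf{B}\to\mathbf{D}$ be a lens with $G\circ F_1=G\circ F_2$, and let $H\colon\mathbf{C}\to\mathbf{D}$ be the unique functor with $UG=H\circ UE$. Then there is a unique lens structure on $H$ such that $\varphi_{H,EB}(d)=E\,\varphi_{G,B}(d)$ for all objects $B$ of $\mathbf{B}$ and all morphisms $d$ of $\mathbf{D}$ with domain $GB$.
   Context: A lens $F\colon \mathbf{A}\to\mathbf{B}$ between small categories consists of a functor $F\colon\mathbf{A}\to\mathbf{B}$ (the get functor) together with, for each object $A$ of $\mathbf{A}$, a function $\varphi_{F,A}$ from the set of morphisms of $\mathbf{B}$ with domain $FA$ to the set of morphisms of $\mathbf{A}$ with domain $A$, such that: $F(\varphi_{F,A}b)=b$; $\varphi_{F,A}(\mathrm{id}_{FA})=\mathrm{id}_A$; and $\varphi_{F,A}(b'\circ b)=\varphi_{F,A'}(b')\circ\varphi_{F,A}(b)$ whenever $b$ has domain $FA$, $A'$ is the codomain of $\varphi_{F,A}b$, and $b'$ has domain $FA'$. A lens structure on a functor is a choice of such put functions. $\mathbf{Lens}$ is the category of small categories and lenses, with composite of $F\colon\mathbf{A}\to\mathbf{B}$, $G\colon\mathbf{B}\to\mathbf{C}$ having get functor $G\circ F$ and puts $\varphi_{G\circ F,A}(c)=\varphi_{F,A}(\varphi_{G,FA}(c))$.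 $U\colon\mathbf{Lens}\to\mathbf{Cat}$ sends a lens to its get functor. *)

Set Implicit Arguments.

Record Category := {
  Ob : Type;
  Mor : Type;
  dom : Mor -> Ob;
  cod : Mor -> Ob;
  idm : Ob -> Mor;
  comp : Mor -> Mor -> Mor;  (* comp g f = g o f, meaningful when cod f = dom g *)
  dom_id : forall a, dom (idm a) = a;
  cod_id : forall a, cod (idm a) = a;
  dom_comp : forall f g, cod f = dom g -> dom (comp g f) = dom f;
  cod_comp : forall f g, cod f = dom g -> cod (comp g f) = cod g;
  comp_id_l : forall f, comp (idm (cod f)) f = f;
  comp_id_r : forall f, comp f (idm (dom f)) = f;
  comp_assoc : forall f g h, cod f = dom g -> cod g = dom h ->
      comp h (comp g f) = comp (comp h g) f
}.

Arguments dom {c} _.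
Arguments cod {c} _.
Arguments idm {c} _.
Arguments comp {c} _ _.

Record Functor (A B : Category) := {
  fo : Ob A -> Ob B;
  fm : Mor A -> Mor B;
  f_dom : forall f, dom (fm f) = fo (dom f);
  f_cod : forall f, cod (fm f) = fo (cod f);
  f_id : forall a, fm (idm a) = idm (fo a);
  f_comp : forall f g, cod f = dom g -> fm (comp g f) = comp (fm g) (fm f)
}.

Arguments fo {A B} _ _.
Arguments fm {A B} _ _.

Definition functor_eq {A B} (F G : Functor A B) : Prop :=
  (forall a, fo F a = fo G a) /\ (forall f, fm F f = fm G f).

Definition fcomp_fo {A B C} (G : Functor B C) (F : Functor A B) := fun a => fo G (fo F a).
Definition fcomp_fm {A B C} (G : Functor B C) (F : Functor A B) := fun f => fm G (fm F f).

Lemma fcomp_dom {A B C} (G : Functor B C) (F : Functor A B) :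
  forall f, dom (fcomp_fm G F f) = fcomp_fo G F (dom f).
Proof. intro f; unfold fcomp_fm, fcomp_fo; rewrite f_dom, f_dom; reflexivity. Qed.
Lemma fcomp_cod {A B C} (G : Functor B C) (F : Functor A B) :
  forall f, cod (fcomp_fm G F f) = fcomp_fo G F (cod f).
Proof. intro f; unfold fcomp_fm, fcomp_fo; rewrite f_cod, f_cod; reflexivity. Qed.
Lemma fcomp_id {A B C} (G : Functor B C) (F : Functor A B) :
  forall a, fcomp_fm G F (idm a) = idm (fcomp_fo G F a).
Proof. intro a; unfold fcomp_fm, fcomp_fo; rewrite f_id, f_id; reflexivity. Qed.
Lemma fcomp_comp {A B C} (G : Functor B C) (F : Functor A B) :
  forall f g, cod f = dom g ->
    fcomp_fm G F (comp g f) = comp (fcomp_fm G F g) (fcomp_fm G F f).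
Proof.
  intros f g H; unfold fcomp_fm; rewrite (f_comp F f g H), f_comp; [reflexivity|].
  rewrite f_cod, f_dom, H; reflexivity.
Qed.

Definition fcomp {A B C} (G : Functor B C) (F : Functor A B) : Functor A C :=
  {| fo := fcomp_fo G F; fm := fcomp_fm G F;
     f_dom := fcomp_dom G F; f_cod := fcomp_cod G F;
     f_id := fcomp_id G F; f_comp := fcomp_comp G F |}.

(* A lens structure (put functions) on a functor F : A -> B.
   phi a b is only specified for b with dom b = F a. *)
Definition is_lens_structure {A B} (F : Functor A B) (phi : Ob A -> Mor B -> Mor A) : Prop :=
  (forall a b, dom b = fo F a -> dom (phi a b) = a) /\
  (forall a b, dom b = fo F a -> fm F (phi a b) = b) /\
  (forall a, phi a (idm (fo F a)) = idm a) /\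
  (forall a b b', dom b = fo F a -> dom b' = fo F (cod (phi a b)) ->
      phi a (comp b' b) = comp (phi (cod (phi a b)) b') (phi a b)).

Record Lens (A B : Category) := {
  lget : Functor A B;
  lput : Ob A -> Mor B -> Mor A;
  lput_ax : is_lens_structure lget lput
}.

Arguments lget {A B} _.
Arguments lput {A B} _ _ _.

Definition lens_eq {A B} (L M : Lens A B) : Prop :=
  functor_eq (lget L) (lget M) /\
  (forall a b, dom b = fo (lget L) a -> lput L a b = lput M a b).

Definition lcomp_put {A B C} (G : Lens B C) (F : Lens A B) : Ob A -> Mor C -> Mor A :=
  fun a c => lput F a (lput G (fo (lget F) a) c).

Lemma lcomp_ax {A B C} (G : Lens B C) (F : Lens A B) :
  is_lens_structure (fcomp (lget G) (lget F)) (lcomp_put G F).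
Proof.
  destruct F as [F phi [P1 [P2 [P3 P4]]]]; destruct G as [G psi [Q1 [Q2 [Q3 Q4]]]].
  unfold lcomp_put, is_lens_structure; cbn [fcomp fo fm lget lput]; unfold fcomp_fo, fcomp_fm.
  split; [|split; [|split]].
  - intros a c Hc. apply P1. apply Q1. exact Hc.
  - intros a c Hc. rewrite (P2 a (psi (fo F a) c)) by (apply Q1; exact Hc). apply Q2. exact Hc.
  - intros a. rewrite Q3. apply P3.
  - intros a c c' Hc Hc'.
    assert (E1 : dom (psi (fo F a) c) = fo F a) by (apply Q1; exact Hc).
    assert (E2 : cod (psi (fo F a) c) = fo F (cod (phi a (psi (fo F a) c)))).
    { transitivity (cod (fm F (phi a (psi (fo F a) c)))).
      - rewrite (P2 a _ E1). reflexivity.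
      - apply f_cod. }
    rewrite Q4 by (exact Hc || (rewrite <- E2 in Hc'; exact Hc')).
    rewrite P4; [ | exact E1 | ].
    + rewrite <- E2. reflexivity.
    + rewrite Q1; [exact E2|]. rewrite <- E2 in Hc'. exact Hc'.
Qed.

Definition lcomp {A B C} (G : Lens B C) (F : Lens A B) : Lens A C :=
  {| lget := fcomp (lget G) (lget F); lput := lcomp_put G F; lput_ax := lcomp_ax G F |}.

Definition is_coequaliser {A B C} (F1 F2 : Functor A B) (E : Functor B C) : Prop :=
  functor_eq (fcomp E F1) (fcomp E F2) /\
  forall (X : Category) (K : Functor B X),
    functor_eq (fcomp K F1) (fcomp K F2) ->
    exists H : Functor C X, functor_eq (fcomp H E) K /\
      forall H' : Functor C X, functor_eq (fcomp H' E) K -> functor_eq H' H.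

(* Mapping into indiscrete categories shows that a coequaliser E of UF1, UF2 in Cat is surjective
   on objects and that every object map coequalising UF1, UF2 is constant on the fibres of E.
   Since put_G (Fi a) d = Fi (put_{G o Fi} a d) and G o F1 = G o F2 as lenses, the object map
   b |-> (d |-> E (put_G b d)) coequalises UF1, UF2; so E (put_G b d) depends only on E b, and
   phi_H (E b) d := E (put_G b d) is well defined.  It inherits the lens laws from G, and is unique
   because E is surjective on objects. *)
From Stdlib Require Import PropExtensionality FunctionalExtensionality ClassicalEpsilon.

Definition indiscrete (T : Type) : Category.
Proof.
  refine {| Ob := T; Mor := T * T; dom := fst; cod := snd;
            idm := fun a => (a, a); comp := fun g f => (fst f, snd g) |};
    try (intros; reflexivity).
  all: intros [x y]; reflexivity.
Defined.

Definition indiscrete_functor {B : Category} (T : Type) (o : Ob B -> T) :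
  Functor B (indiscrete T).
Proof.
  refine {| fo := (o : Ob B -> Ob (indiscrete T));
            fm := fun f => (o (dom f), o (cod f)) : Mor (indiscrete T) |}.
  - reflexivity.
  - reflexivity.
  - intros a; cbn; rewrite dom_id, cod_id; reflexivity.
  - intros f g Hfg; cbn; rewrite dom_comp, cod_comp by exact Hfg; reflexivity.
Defined.

Section CoequaliserObjects.

Context {A B C : Category} {F1 F2 : Functor A B} {E : Functor B C}.
Hypothesis hcoeq : is_coequaliser F1 F2 E.

Lemma coequaliser_ob_fibre (T : Type) (o : Ob B -> T) :
  (forall a, o (fo F1 a) = o (fo F2 a)) ->
  forall b b', fo E b = fo E b' -> o b = o b'.
Proof.
  intros Ho b b' Hb.
  destruct hcoeq as [_ factor].
  destruct (factor _ (indiscrete_functor T o)) as [K [[HKo _] _]].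
  - split; intro f; cbn; unfold fcomp_fo, fcomp_fm; cbn; rewrite ?f_dom, ?f_cod, ?Ho;
      reflexivity.
  - cbn in HKo; unfold fcomp_fo in HKo.
    rewrite <- (HKo b), <- (HKo b'), Hb; reflexivity.
Qed.

Lemma coequaliser_ob_epi (T : Type) (o1 o2 : Ob C -> T) :
  (forall b, o1 (fo E b) = o2 (fo E b)) -> forall c, o1 c = o2 c.
Proof.
  intros Ho c.
  destruct hcoeq as [[hEo _] factor].
  cbn in hEo; unfold fcomp_fo in hEo.
  set (K := indiscrete_functor (B := B) T (fun b => o1 (fo E b))).
  assert (factors : forall o : Ob C -> T, (forall b, o (fo E b) = o1 (fo E b)) ->
            functor_eq (fcomp (indiscrete_functor T o) E) K).
  { intros o Hoo; split; intro f; cbn; unfold fcomp_fo, fcomp_fm; cbn;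
      rewrite ?f_dom, ?f_cod, ?Hoo; reflexivity. }
  destruct (factor _ K) as [L [_ L_unique]].
  - split; intro f; cbn; unfold fcomp_fo, fcomp_fm; cbn; rewrite ?f_dom, ?f_cod, ?hEo;
      reflexivity.
  - destruct (L_unique _ (factors o1 (fun _ => eq_refl))) as [L1 _].
    destruct (L_unique _ (factors o2 (fun b => eq_sym (Ho b)))) as [L2 _].
    exact (eq_trans (L1 c) (eq_sym (L2 c))).
Qed.

Lemma coequaliser_ob_surj : forall c, exists b, fo E b = c.
Proof.
  intro c.
  rewrite (coequaliser_ob_epi Prop (fun c => exists b, fo E b = c) (fun _ => True)); [exact I|].
  intro b; apply propositional_extensionality; split; [trivial|].
  intros _; exists b; reflexivity.
Qed.

Lemma coequaliser_ob_section : exists s : Ob C -> Ob B, forall c, fo E (s c) = c.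
Proof.
  exists (fun c => proj1_sig (constructive_indefinite_description _ (coequaliser_ob_surj c))).
  intro c; exact (proj2_sig (constructive_indefinite_description _ (coequaliser_ob_surj c))).
Qed.

End CoequaliserObjects.

Section CoequalisedPuts.

Context {A B C D : Category} {F1 F2 : Lens A B} {E : Functor B C} {G : Lens B D}.
Hypothesis hGF : lens_eq (lcomp G F1) (lcomp G F2).

Lemma lens_eq_get_ob a : fo (lget G) (fo (lget F1) a) = fo (lget G) (fo (lget F2) a).
Proof. destruct hGF as [[hGo _] _]; exact (hGo a). Qed.

(* [put_G (Fi a) d] is [Fi] applied to the common put of [G o F1] and [G o F2]. *)
Lemma coequalised_put (hEF_get : functor_eq (fcomp E (lget F1)) (fcomp E (lget F2))) a d :
  dom d = fo (lget G) (fo (lget F1) a) ->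
  fm E (lput G (fo (lget F1) a) d) = fm E (lput G (fo (lget F2) a) d).
Proof.
  intro Hd.
  destruct (lput_ax G) as [G_dom _].
  destruct (lput_ax F1) as [_ [F1_get _]], (lput_ax F2) as [_ [F2_get _]].
  destruct hGF as [_ hGp]; cbn in hGp; unfold lcomp_put in hGp.
  pose proof Hd as Hd2; rewrite lens_eq_get_ob in Hd2.
  rewrite <- (F1_get _ _ (G_dom _ _ Hd)), <- (F2_get _ _ (G_dom _ _ Hd2)).
  rewrite (hGp a d Hd).
  destruct hEF_get as [_ hEm]; apply hEm.
Qed.

Definition put_graph (b : Ob B) (d : Mor D) (m : Mor C) : Prop :=
  dom d = fo (lget G) b /\ m = fm E (lput G b d).

Lemma coequaliser_put_fibre :
  is_coequaliser (lget F1) (lget F2) E ->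
  forall b b' d, fo E b = fo E b' -> dom d = fo (lget G) b ->
    fm E (lput G b d) = fm E (lput G b' d).
Proof.
  intros hcoeq b b' d Hb Hd.
  assert (graph_eq : put_graph b = put_graph b').
  { apply (coequaliser_ob_fibre hcoeq); [|exact Hb].
    intro a; apply functional_extensionality; intro d0;
      apply functional_extensionality; intro m; apply propositional_extensionality.
    unfold put_graph; rewrite <- lens_eq_get_ob.
    pose proof (coequalised_put (proj1 hcoeq) a d0) as Hput.
    split; intros [Hd0 ->]; split; [exact Hd0 | exact (Hput Hd0) | exact Hd0 |].
    exact (eq_sym (Hput Hd0)). }
  assert (Hgraph : put_graph b d (fm E (lput G b d))) by (split; [exact Hd | reflexivity]).
  rewrite graph_eq in Hgraph; exact (proj2 Hgraph).
Qed.

End CoequalisedPuts.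

Section DescendedPuts.

Context {B C D : Category} {E : Functor B C} {G : Lens B D} {H : Functor C D}.
Hypothesis hH : functor_eq (lget G) (fcomp H E).
Context {s : Ob C -> Ob B}.
Hypothesis hs : forall c, fo E (s c) = c.
Hypothesis put_fibre : forall b b' d, fo E b = fo E b' -> dom d = fo (lget G) b ->
  fm E (lput G b d) = fm E (lput G b' d).

Definition descended_put (c : Ob C) (d : Mor D) : Mor C := fm E (lput G (s c) d).

Lemma get_ob_section c : fo (lget G) (s c) = fo H c.
Proof. destruct hH as [hHo _]; rewrite hHo; cbn; unfold fcomp_fo; rewrite hs; reflexivity. Qed.

Lemma descended_put_image b d :
  dom d = fo (lget G) b -> descended_put (fo E b) d = fm E (lput G b d).
Proof.
  intro Hd; apply put_fibre; [rewrite hs; reflexivity|].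
  rewrite get_ob_section, Hd; destruct hH as [hHo _]; exact (hHo b).
Qed.

Lemma descended_put_lens : is_lens_structure H descended_put.
Proof.
  destruct (lput_ax G) as [G_dom [G_get [G_id G_comp]]].
  destruct hH as [hHo hHm]; cbn in hHo, hHm; unfold fcomp_fo in hHo; unfold fcomp_fm in hHm.
  unfold descended_put; split; [|split; [|split]].
  - intros c d Hd; rewrite f_dom, G_dom by (rewrite get_ob_section; exact Hd); apply hs.
  - intros c d Hd; rewrite <- hHm; apply G_get; rewrite get_ob_section; exact Hd.
  - intro c; rewrite <- get_ob_section, G_id, f_id, hs; reflexivity.
  - intros c d d' Hd Hd'.
    rewrite <- get_ob_section in Hd.
    set (p := lput G (s c) d) in *.
    assert (Hd'G : dom d' = fo (lget G) (cod p)) by (rewrite Hd', f_cod, hHo; reflexivity).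
    rewrite (G_comp _ _ _ Hd Hd'G); fold p.
    rewrite f_comp by (rewrite (G_dom _ _ Hd'G); reflexivity).
    f_equal; rewrite f_cod; symmetry; exact (descended_put_image _ _ Hd'G).
Qed.

End DescendedPuts.

Theorem lemma4p6 (A B C D : Category) (F1 F2 : Lens A B) (E : Lens B C)
  (hEF : lens_eq (lcomp E F1) (lcomp E F2))
  (hcoeq : is_coequaliser (lget F1) (lget F2) (lget E))
  (G : Lens B D) (hGF : lens_eq (lcomp G F1) (lcomp G F2))
  (H : Functor C D) (hH : functor_eq (lget G) (fcomp H (lget E))) :
  exists phi : Ob C -> Mor D -> Mor C,
    (is_lens_structure H phi /\
     forall (b : Ob B) (d : Mor D), dom d = fo (lget G) b ->
       phi (fo (lget E) b) d = fm (lget E) (lput G b d)) /\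
    forall psi : Ob C -> Mor D -> Mor C,
      is_lens_structure H psi ->
      (forall (b : Ob B) (d : Mor D), dom d = fo (lget G) b ->
         psi (fo (lget E) b) d = fm (lget E) (lput G b d)) ->
      forall (c : Ob C) (d : Mor D), dom d = fo H c -> psi c d = phi c d.
Proof.
  destruct (coequaliser_ob_section hcoeq) as [s hs].
  pose proof (coequaliser_put_fibre hGF hcoeq) as put_fibre.
  exists (descended_put (E := lget E) (G := G) (s := s)).
  split; [split|].
  - exact (descended_put_lens hH hs put_fibre).
  - exact (descended_put_image hH hs put_fibre).
  - intros psi _ psi_image c d Hd.
    rewrite <- (hs c) at 1; apply psi_image.
    rewrite (get_ob_section hH hs); exact Hd.
Qed.
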